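(* Let $m,d \in \mathbb{N}$, let $A \in \mathbb{R}^{m\times d}$ with rows $a_1^\top,\dots,a_m^\top$ (so $a_i \in \mathbb{R}^d$), let $b=(b_1,\dots,b_m) \in \mathbb{R}^m$ and $c \in \mathbb{R}^d$. For $\hat{x} \in [0,1]^d$ let $P_{\hat{x}} := \bigotimes_{j=1}^d \mathrm{Bernoulli}(\hat{x}_j)$ be the product distribution on $\{0,1\}^d$ whose $j$-th coordinate equals $1$ with probability $\hat{x}_j$, independently across coordinates. Suppose there exists some $x \in \{0,1\}^d$ with $Ax \preccurlyeq b$. Define \[ \delta := \min\Big( \{1\} \cup \Big( \bigcup_{i=1}^m \{ a_i^\top x - b_i : x \in \{0,1\}^d \} \cap (0,\infty) \Big) \Big). \] Then for every $\mu > \dfrac{2\sqrt{d}\,\|c\|_2}{\delta}$, \[ \mathop{\arg\min}_{\hat{x} \in [0,1]^d} \Big( c^\top \hat{x} + \mu \sum_{i=1}^m \mathbb{E}_{x \sim P_{\hat{x}}}\big[\max\{a_i^\top x - b_i, 0\}\big] \Big) = \mathop{\arg\min}_{\hat{x} \in [0,1]^d:\ \sum_{i=1}^m \mathbb{E}_{x \sim P_{\hat{x}}}[\max\{a_i^\top x - b_i, 0\}] = 0} c^\top \hat{x}. \]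
   Context: $\preccurlyeq$ denotes componentwise inequality between vectors in $\mathbb{R}^m$. $\|c\|_2$ is the Euclidean norm. The left-hand side is the set of minimizers over the cube $[0,1]^d$ of the penalized objective; the right-hand side is the set of minimizers of $c^\top\hat{x}$ over those $\hat{x}\in[0,1]^d$ for which the total expected constraint violation is zero. *)

From HB Require Import structures.
From mathcomp Require Import all_boot all_order all_algebra.
From mathcomp Require Import classical_sets reals.
Set Implicit Arguments. Unset Strict Implicit. Unset Printing Implicit Defensive.
Import Order.TTheory GRing.Theory Num.Theory.
Local Open Scope ring_scope.
Local Open Scope classical_set_scope.

(* Points of {0,1}^d are boolean finite functions; coordinate j is (x j)%:R. *)
Definition bvec (d : nat) := {ffun 'I_d -> bool}.

Definition viol (R : realType) (m d : nat) (A : 'M[R]_(m, d)) (b : 'I_m -> R)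
  (i : 'I_m) (x : bvec d) : R :=
  \sum_(j < d) A i j * (x j)%:R - b i.

Definition bern_pmf (R : realType) (d : nat) (xh : 'I_d -> R) (x : bvec d) : R :=
  \prod_(j < d) (if x j then xh j else 1 - xh j).

Definition bern_exp (R : realType) (d : nat) (xh : 'I_d -> R) (f : bvec d -> R) : R :=
  \sum_(x : bvec d) bern_pmf xh x * f x.

Definition exp_violation (R : realType) (m d : nat) (A : 'M[R]_(m, d)) (b : 'I_m -> R)
  (xh : 'I_d -> R) : R :=
  \sum_(i < m) bern_exp xh (fun x => Num.max (viol A b i x) 0).

Definition delta (R : realType) (m d : nat) (A : 'M[R]_(m, d)) (b : 'I_m -> R) : R :=
  \big[Num.min/1]_(i < m) \big[Num.min/1]_(x : bvec d | 0 < viol A b i x) viol A b i x.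

Definition dot (R : realType) (d : nat) (c xh : 'I_d -> R) : R := \sum_(j < d) c j * xh j.

Definition norm2 (R : realType) (d : nat) (c : 'I_d -> R) : R :=
  Num.sqrt (\sum_(j < d) c j ^+ 2).

Definition cube (R : realType) (d : nat) : set ('I_d -> R) :=
  [set xh | forall j, 0 <= xh j <= 1].

Definition argmin (T : Type) (R : realType) (S : set T) (f : T -> R) : set T :=
  [set x | S x /\ forall y, S y -> f x <= f y].

(** The penalized objective is the multilinear extension of its values at the
    vertices of the cube: at xh it is the expectation, under P_xh, of
    G x = c^T x + mu * sum_i max(a_i^T x - b_i, 0).  At a feasible vertex G is
    c^T x; at an infeasible vertex the penalty is at least delta, and since
    c^T x varies by at most sqrt d * |c|_2 over the vertices, mu * delta beats
    that variation: every infeasible vertex costs strictly more than every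
    feasible one.  A mean of G is minimal exactly when P_xh only charges
    minimizers of G, i.e. feasible vertices, which is the same as having zero
    expected violation; on such points the objective reduces to c^T xh. *)

From HB Require Import structures.
From mathcomp Require Import all_boot all_order all_algebra.
From mathcomp Require Import classical_sets reals.
From mathcomp Require Import ring lra.
Set Implicit Arguments. Unset Strict Implicit. Unset Printing Implicit Defensive.
Import Order.TTheory GRing.Theory Num.Theory.
Local Open Scope ring_scope.
Local Open Scope classical_set_scope.

Section WeightedMean.
Variables (R : realDomainType) (T : finType) (p : T -> R).
Hypotheses (p_ge0 : forall x, 0 <= p x) (p_sum1 : \sum_x p x = 1).

Lemma weighted_mean_ge (f : T -> R) (t : R) :
  (forall x, t <= f x) -> t <= \sum_x p x * f x.
Proof.
move=> t_le_f; rewrite -[t]mul1r -p_sum1 big_distrl /=.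
by apply: ler_sum => x _; rewrite ler_wpM2l.
Qed.

Lemma weighted_mean_min_support (f : T -> R) (x : T) :
  (forall y, \sum_z p z * f z <= f y) -> p x != 0 -> f x = \sum_z p z * f z.
Proof.
set M := \sum_z p z * f z => M_min px_neq0.
have dev_sum0 : \sum_z p z * (f z - M) = 0.
  under eq_bigr => z _ do rewrite mulrBr.
  by rewrite sumrB -big_distrl /= p_sum1 mul1r subrr.
have dev_ge0 z : true -> 0 <= p z * (f z - M) by rewrite mulr_ge0 ?subr_ge0.
move: (psumr_eq0P dev_ge0 dev_sum0 (i := x) isT) => /eqP.
by rewrite mulf_eq0 (negbTE px_neq0) subr_eq0 => /eqP.
Qed.

End WeightedMean.

Lemma sqr_sum_le (R : realDomainType) (n : nat) (a : 'I_n -> R) :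
  (\sum_(j < n) a j) ^+ 2 <= n%:R * \sum_(j < n) a j ^+ 2.
Proof.
set S := \sum_(j < n) a j ^+ 2.
have double_sum : \sum_(j < n) \sum_(k < n) (a j ^+ 2 + a k ^+ 2) = 2 * (n%:R * S).
  rewrite (eq_bigr (fun j => a j ^+ 2 *+ n + S)); last first.
    by move=> j _; rewrite big_split /= sumr_const card_ord.
  by rewrite big_split /= sumrMnl sumr_const card_ord -/S -mulr_natr; ring.
suff : 2 * (\sum_(j < n) a j) ^+ 2 <= 2 * (n%:R * S) by lra.
rewrite -double_sum expr2 big_distrl /= big_distrr /=; apply: ler_sum => j _.
rewrite !big_distrr /=; apply: ler_sum => k _.
have := sqr_ge0 (a j - a k); rewrite sqrrB; lra.
Qed.

Lemma sum_abs_le_norm2 (R : realType) (d : nat) (c : 'I_d -> R) :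
  \sum_(j < d) `|c j| <= Num.sqrt d%:R * norm2 c.
Proof.
rewrite /norm2 -sqrtrM ?ler0n // -[leLHS]ger0_norm ?sumr_ge0 // -sqrtr_sqr.
have -> : \sum_(j < d) c j ^+ 2 = \sum_(j < d) `|c j| ^+ 2.
  by apply: eq_bigr => j _; rewrite real_normK ?num_real.
by rewrite ler_wsqrtr ?sqr_sum_le.
Qed.

Definition vtx (R : realType) (d : nat) (x : bvec d) : 'I_d -> R :=
  fun j => (x j)%:R.
Arguments vtx (R) {d}.

Lemma vtx_cube (R : realType) (d : nat) (x : bvec d) : cube (vtx R x).
Proof. by move=> j; rewrite /vtx; case: (x j); rewrite /= ?lexx ?ler01. Qed.

Lemma dot_vtxB_le (R : realType) (d : nat) (c : 'I_d -> R) (x y : bvec d) :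
  dot c (vtx R x) - dot c (vtx R y) <= Num.sqrt d%:R * norm2 c.
Proof.
apply: le_trans (sum_abs_le_norm2 c); rewrite /dot -sumrB.
apply: ler_sum => j _; rewrite -mulrBr (le_trans (ler_norm _)) // normrM.
rewrite ler_piMr // /vtx.
by case: (x j); case: (y j); rewrite /= ?subrr ?subr0 ?sub0r ?normrN ?normr0 ?normr1.
Qed.

Section BernoulliProduct.
Variables (R : realType) (d : nat).
Implicit Types (xh : 'I_d -> R) (f g : bvec d -> R).

Lemma bern_pmf_ge0 xh : cube xh -> forall x : bvec d, 0 <= bern_pmf xh x.
Proof.
move=> xh_cube x; apply: prodr_ge0 => j _; case/andP: (xh_cube j) => ? ?.
by case: (x j); rewrite ?subr_ge0.
Qed.

Lemma sum_bern_pmf xh : \sum_(x : bvec d) bern_pmf xh x = 1.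
Proof.
rewrite /bern_pmf -(bigA_distr_bigA (fun j (t : bool) => if t then xh j else 1 - xh j)).
by rewrite big1 // => j _; rewrite big_bool /= addrC subrK.
Qed.

Lemma bern_pmf_vtx (x y : bvec d) : bern_pmf (vtx R y) x = (x == y)%:R.
Proof.
have [-> | x_neq_y] := eqVneq x y.
  by rewrite /bern_pmf big1 // => j _; rewrite /vtx; case: (y j); rewrite /= ?subr0.
have [j xj_neq] : exists j, x j != y j.
  apply/existsP; move: x_neq_y; apply: contraNT; rewrite negb_exists => /forallP xy.
  by apply/eqP/ffunP => j; apply/eqP; rewrite -[_ == _]negbK xy.
rewrite /bern_pmf (bigD1 j) //= /vtx.
by move: xj_neq; case: (x j); case: (y j) => //= _; rewrite ?subrr mul0r.
Qed.

Lemma bern_exp_vtx (y : bvec d) f : bern_exp (vtx R y) f = f y.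
Proof.
rewrite /bern_exp (bigD1 y) //= bern_pmf_vtx eqxx mul1r big1 ?addr0 // => x.
by move=> /negbTE x_neq_y; rewrite bern_pmf_vtx x_neq_y mul0r.
Qed.

Lemma bern_exp_coord xh (j : 'I_d) : bern_exp xh (fun x => (x j)%:R) = xh j.
Proof.
pose F i (t : bool) := (if t then xh i else 1 - xh i) * (if i == j then t%:R else 1).
transitivity (\sum_(x : bvec d) \prod_(i < d) F i (x i)).
  apply: eq_bigr => x _; rewrite big_split /=; congr (_ * _).
  by rewrite (bigD1 j) //= eqxx big1 ?mulr1 // => i /negbTE ->.
rewrite -bigA_distr_bigA (bigD1 j) //= [X in _ * X]big1 ?mulr1.
  by rewrite big_bool /F /= eqxx; ring.
by move=> i /negbTE i_neq_j; rewrite big_bool /F /= i_neq_j; ring.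
Qed.

Lemma bern_expD xh f g :
  bern_exp xh (fun x => f x + g x) = bern_exp xh f + bern_exp xh g.
Proof. by rewrite /bern_exp -big_split; apply: eq_bigr => x _; rewrite mulrDr. Qed.

Lemma bern_expZ xh (k : R) f :
  bern_exp xh (fun x => k * f x) = k * bern_exp xh f.
Proof. by rewrite /bern_exp big_distrr; apply: eq_bigr => x _; rewrite mulrCA. Qed.

Lemma bern_exp_sum xh (n : nat) (F : 'I_n -> bvec d -> R) :
  bern_exp xh (fun x => \sum_(i < n) F i x) = \sum_(i < n) bern_exp xh (F i).
Proof.
by rewrite /bern_exp exchange_big; apply: eq_bigr => x _; rewrite big_distrr.
Qed.

Lemma dot_bern_exp (c : 'I_d -> R) xh : dot c xh = bern_exp xh (fun x => dot c (vtx R x)).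
Proof.
rewrite bern_exp_sum; apply: eq_bigr => j _.
by rewrite bern_expZ bern_exp_coord.
Qed.

End BernoulliProduct.

Section Penalty.
Variables (R : realType) (m d : nat) (A : 'M[R]_(m, d)) (b : 'I_m -> R).

Definition penalty (x : bvec d) : R := \sum_(i < m) Num.max (viol A b i x) 0.

Definition feasible (x : bvec d) : bool := [forall i, viol A b i x <= 0].

Lemma penalty_feasible (x : bvec d) : feasible x -> penalty x = 0.
Proof. by move=> /forallP x_feas; apply: big1 => i _; apply/max_idPr. Qed.

Lemma delta_gt0 : 0 < delta A b.
Proof.
have min_gt0 (x y : R) : 0 < x -> 0 < y -> 0 < Num.min x y by rewrite lt_min => -> ->.
by apply: (big_ind (fun x : R => 0 < x)) => // i _; apply: (big_ind (fun x : R => 0 < x)).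
Qed.

Lemma delta_le_penalty (i : 'I_m) (x : bvec d) :
  0 < viol A b i x -> delta A b <= penalty x.
Proof.
move=> viol_gt0; apply: (@le_trans _ _ (viol A b i x)).
  by rewrite /delta (bigD1 i) //= ge_min (bigD1 x) //= ge_min lexx.
rewrite /penalty (bigD1 i) //= -[leLHS]addr0 lerD ?le_max ?lexx //.
by apply: sumr_ge0 => k _; rewrite le_max lexx orbT.
Qed.

Lemma exp_violation_bern_exp (xh : 'I_d -> R) :
  exp_violation A b xh = bern_exp xh penalty.
Proof. by rewrite bern_exp_sum. Qed.

Lemma exp_violation_vtx_feasible (x : bvec d) :
  feasible x -> exp_violation A b (vtx R x) = 0.
Proof. by move=> x_feas; rewrite exp_violation_bern_exp bern_exp_vtx penalty_feasible. Qed.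

Variables (c : 'I_d -> R) (mu : R).

Definition penalized_cost (x : bvec d) : R := dot c (vtx R x) + mu * penalty x.

Lemma penalized_objective_bern_exp (xh : 'I_d -> R) :
  dot c xh + mu * exp_violation A b xh = bern_exp xh penalized_cost.
Proof. by rewrite bern_expD bern_expZ exp_violation_bern_exp -dot_bern_exp. Qed.

Lemma penalized_objective_vtx (x : bvec d) :
  dot c (vtx R x) + mu * exp_violation A b (vtx R x) = penalized_cost x.
Proof. by rewrite penalized_objective_bern_exp bern_exp_vtx. Qed.

Lemma penalized_cost_feasible (x : bvec d) :
  feasible x -> penalized_cost x = dot c (vtx R x).
Proof. by move=> /penalty_feasible x_pen0; rewrite /penalized_cost x_pen0 mulr0 addr0. Qed.

Hypothesis mu_large : Num.sqrt d%:R * norm2 c < mu * delta A b.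

Lemma penalized_cost_infeasible_gt (x y : bvec d) (i : 'I_m) :
  feasible y -> 0 < viol A b i x -> penalized_cost y < penalized_cost x.
Proof.
move=> y_feas viol_gt0; rewrite penalized_cost_feasible // /penalized_cost.
have mu_gt0 : 0 < mu.
  have K_ge0 : 0 <= Num.sqrt d%:R * norm2 c by rewrite mulr_ge0 ?sqrtr_ge0.
  by rewrite -(pmulr_lgt0 _ delta_gt0); apply: le_lt_trans mu_large.
rewrite -ltrBlDl (le_lt_trans (dot_vtxB_le c y x)) // (lt_le_trans mu_large) //.
by rewrite ler_wpM2l ?(ltW mu_gt0) ?(delta_le_penalty viol_gt0).
Qed.

Variable x0 : bvec d.
Hypothesis x0_feasible : feasible x0.

Lemma argmin_penalized_sub :
  argmin (@cube R d) (fun xh => dot c xh + mu * exp_violation A b xh)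
  `<=` argmin (@cube R d `&` [set xh | exp_violation A b xh = 0]) (dot c).
Proof.
move=> xh [xh_cube xh_min].
have le_cost x : bern_exp xh penalized_cost <= penalized_cost x.
  rewrite -penalized_objective_bern_exp -penalized_objective_vtx.
  by apply: xh_min; exact: vtx_cube.
have support_feasible x : bern_pmf xh x != 0 -> feasible x.
  move=> px_neq0; apply/forallP => i; rewrite leNgt; apply/negP => viol_gt0.
  have := weighted_mean_min_support (bern_pmf_ge0 xh_cube) (sum_bern_pmf xh) le_cost px_neq0.
  have := penalized_cost_infeasible_gt x0_feasible viol_gt0.
  have := le_cost x0; rewrite /bern_exp; lra.
have xh_viol0 : exp_violation A b xh = 0.
  rewrite exp_violation_bern_exp; apply: big1 => x _.
  have [-> | /support_feasible/penalty_feasible ->] := eqVneq (bern_pmf xh x) 0;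
    by rewrite ?mul0r ?mulr0.
split=> [// | y [y_cube y_viol0]].
by have := xh_min y y_cube; rewrite xh_viol0 y_viol0 !mulr0 !addr0.
Qed.

Lemma argmin_constrained_sub :
  argmin (@cube R d `&` [set xh | exp_violation A b xh = 0]) (dot c)
  `<=` argmin (@cube R d) (fun xh => dot c xh + mu * exp_violation A b xh).
Proof.
move=> xh [[xh_cube xh_viol0] xh_min]; split=> // y y_cube.
have le_feasible x : feasible x -> dot c xh <= penalized_cost x.
  move=> x_feas; rewrite penalized_cost_feasible //.
  by apply: xh_min; split; [exact: vtx_cube | exact: exp_violation_vtx_feasible].
rewrite xh_viol0 mulr0 addr0 penalized_objective_bern_exp /bern_exp.
apply: (weighted_mean_ge (bern_pmf_ge0 y_cube) (sum_bern_pmf y)) => x.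
have [/le_feasible // | /forallPn [i]] := boolP (feasible x).
rewrite -ltNge => /(penalized_cost_infeasible_gt x0_feasible).
by have := le_feasible x0 x0_feasible; lra.
Qed.

End Penalty.

Theorem theorem2 (R : realType) (m d : nat) (A : 'M[R]_(m, d)) (b : 'I_m -> R)
  (c : 'I_d -> R) :
  (exists x : bvec d, forall i : 'I_m, \sum_(j < d) A i j * (x j)%:R <= b i) ->
  forall mu : R, 2 * Num.sqrt (d%:R) * norm2 c / delta A b < mu ->
  argmin (@cube R d) (fun xh => dot c xh + mu * exp_violation A b xh)
  = argmin (@cube R d `&` [set xh | exp_violation A b xh = 0]) (dot c).
Proof.
move=> [x0 x0_sat] mu mu_gt.
have x0_feasible : feasible A b x0 by apply/forallP => i; rewrite /viol subr_le0.
have mu_large : Num.sqrt d%:R * norm2 c < mu * delta A b.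
  have K_ge0 : 0 <= Num.sqrt d%:R * norm2 c by rewrite mulr_ge0 ?sqrtr_ge0.
  move: mu_gt; rewrite ltr_pdivrMr ?delta_gt0 // -mulrA; lra.
rewrite eqEsubset; split.
- exact: (argmin_penalized_sub mu_large x0_feasible).
- exact: (argmin_constrained_sub mu_large x0_feasible).
Qed.
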